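(* For every even positive integer $k$ there exists a connected graph $G$ with exactly $k$ basis forced vertices and $|E(G)|=\frac{n(n-1)}{2}-2k$, where $n=|V(G)|$.
   Context: All graphs are finite and simple. For vertices $u,v$ of a connected graph $G$, $d(u,v)$ is the length of a shortest $u$–$v$ path. A set $R\subseteq V(G)$ is a resolving set if for all distinct $x,y\in V(G)$ there is $r\in R$ with $d(r,x)\neq d(r,y)$. The metric dimension $\dim(G)$ is the minimum cardinality of a resolving set, and a resolving set of cardinality $\dim(G)$ is a metric basis. A vertex is a basis forced vertex if it belongs to every metric basis of $G$. *)

From mathcomp Require Import all_boot.
Set Implicit Arguments. Unset Strict Implicit. Unset Printing Implicit Defensive.

Section Graph.
Variables (T : finType) (e : rel T).

Definition simple_graph : bool :=
  [forall x, ~~ e x x] && [forall x, forall y, e x y == e y x].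

Definition connected_graph : Prop := forall x y : T, connect e x y.

Definition edges : {set {set T}} := [set [set x; y] | x in T, y in T & e x y].

Definition walk_len (x y : T) (m : nat) : bool :=
  [exists p : m.-tuple T, path e x p && (last x p == y)].

(* d(x,y): least m such that a walk (equivalently a path) of length m joins
   x to y; shortest walks have length < #|T| when they exist, and for
   unreachable pairs the value is #|T| (irrelevant for connected graphs). *)
Definition dist (x y : T) : nat := find (walk_len x y) (iota 0 #|T|).

Definition resolving (R : {set T}) : bool :=
  [forall x, forall y, (x != y) ==> [exists r in R, dist r x != dist r y]].

Definition metric_basis (R : {set T}) : bool :=
  resolving R && [forall S : {set T}, resolving S ==> (#|R| <= #|S|)].

Definition basis_forced (v : T) : bool :=
  [forall R : {set T}, metric_basis R ==> (v \in R)].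

Definition basis_forced_set : {set T} := [set v | basis_forced v].

End Graph.

From mathcomp Require Import all_boot zify.
Set Implicit Arguments. Unset Strict Implicit. Unset Printing Implicit Defensive.

(* Let H be the disjoint union of m copies of the path 0-1-2-3-4 and of one isolated
   vertex, and let G be the complement of H.  The isolated vertex is universal in G, so
   distances in G are 0, 1 or 2, and R resolves G iff every two vertices outside R are
   told apart by their H-adjacency to some vertex of R.  Inside one copy of the path
   this needs at least two vertices of R, while the 2m odd positions do resolve G.  A
   metric basis R therefore has exactly two vertices in each copy and misses the
   isolated vertex, so every vertex outside R also needs an H-neighbour in R; the only
   such pair in a copy is {1, 3}.  Hence the odd positions form the unique metric basis,
   and G lacks exactly the 4m edges of H.  Taking m = k/2 gives the theorem. *)

Lemma simple_graphP (T : finType) (e : rel T) :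
  reflect (irreflexive e /\ symmetric e) (simple_graph e).
Proof.
apply: (iffP andP) => [[/forallP irr /forallP sym]|[irr sym]].
  by split=> [x | x y]; [apply/negbTE/irr | apply/eqP/(forallP (sym x))].
split; apply/forallP => x; first by rewrite irr.
by apply/forallP => y; rewrite sym.
Qed.

Lemma resolvingP (T : finType) (e : rel T) (R : {set T}) :
  reflect (forall x y, x != y -> exists2 r, r \in R & dist e r x != dist e r y)
          (resolving e R).
Proof.
apply: (iffP forallP) => [res x y xy | res x].
  by have /existsP[r /andP[]] := implyP (forallP (res x) y) xy; exists r.
apply/forallP => y; apply/implyP => /res[r rR d].
by apply/existsP; exists r; rewrite rR.
Qed.

(** * Distances and resolving sets in graphs with a universal vertex *)

Section Walks.
Variables (T : finType) (e : rel T).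

Lemma walk_len0 x y : walk_len e x y 0 = (x == y).
Proof.
apply/existsP/eqP => [[[[|//] _] /= /eqP] // | <-].
by exists [tuple]; rewrite /= eqxx.
Qed.

Lemma walk_len1 x y : walk_len e x y 1 = e x y.
Proof.
apply/existsP/idP => [[[[|a [|//]] _]] //= /andP[/andP[exa _] /eqP <-] // | exy].
by exists [tuple y]; rewrite /= exy eqxx.
Qed.

Lemma walk_len2 x w y : e x w -> e w y -> walk_len e x y 2.
Proof. by move=> exw ewy; apply/existsP; exists [tuple w; y]; rewrite /= exw ewy eqxx. Qed.

Lemma uniq_size_le_card (s : seq T) : uniq s -> size s <= #|T|.
Proof. by move/card_uniqP <-; apply: max_card. Qed.

Lemma dist_eq x y k : k < #|T| -> walk_len e x y k ->
  (forall j, j < k -> ~~ walk_len e x y j) -> dist e x y = k.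
Proof.
move=> k_lt wk below; have [t cardT] : exists t, #|T| = k + t.+1.
  by exists (#|T| - k.+1); lia.
rewrite /dist cardT iotaD find_cat size_iota /= add0n wk addn0.
have -> // : has (walk_len e x y) (iota 0 k) = false.
  by apply/hasPn => j; rewrite mem_iota => /andP[_]; apply: below.
Qed.

End Walks.

Definition adj_resolving (T : finType) (e : rel T) (R : {set T}) : Prop :=
  forall x y, x != y -> x \notin R -> y \notin R ->
  exists2 r, r \in R & e r x != e r y.

Section UniversalVertex.
Variables (T : finType) (e : rel T) (z : T).
Hypothesis z_universal : forall x, x != z -> e z x && e x z.

Lemma dist_universal x y :
  dist e x y = if x == y then 0 else if e x y then 1 else 2.
Proof.
case: eqVneq => [<-|xy].
  apply: dist_eq; rewrite ?walk_len0 //.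
  by apply: (@uniq_size_le_card _ [:: x]).
case exy: (e x y).
  apply: dist_eq; rewrite ?walk_len1 //; last by case=> // _; rewrite walk_len0 xy.
  by apply: (@uniq_size_le_card _ [:: x; y]); rewrite /= inE xy.
have xz : x != z.
  by apply: contraFneq exy => xz; move: xy; rewrite xz eq_sym => /z_universal/andP[].
have yz : y != z.
  by apply: contraFneq exy => yz; move: xy; rewrite yz => /z_universal/andP[].
apply: dist_eq.
- by apply: (@uniq_size_le_card _ [:: x; y; z]); rewrite /= !inE !negb_or xy xz yz.
- case/andP: (z_universal xz) => _ exz; case/andP: (z_universal yz) => ezy _.
  exact: walk_len2 exz ezy.
- by case=> [|[]] // _; rewrite ?walk_len0 ?walk_len1 ?xy ?exy.
Qed.

Lemma resolving_universalP (R : {set T}) : reflect (adj_resolving e R) (resolving e R).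
Proof.
apply: (iffP (resolvingP _ _)) => [res x y xy xR yR | res x y xy].
  have [r rR d] := res x y xy; exists r => //.
  have rx : r != x by apply: contraNneq xR => <-.
  have ry : r != y by apply: contraNneq yR => <-.
  by move: d; rewrite !dist_universal (negbTE rx) (negbTE ry); do 2!case: ifP.
case xR: (x \in R).
  by exists x; rewrite // !dist_universal eqxx (negbTE xy); case: ifP.
case yR: (y \in R).
  by exists y; rewrite // !dist_universal eqxx (eq_sym y) (negbTE xy); case: ifP.
have [r rR d] := res x y xy (negbT xR) (negbT yR); exists r => //.
have rx : r != x by apply: contraTneq rR => ->; rewrite xR.
have ry : r != y by apply: contraTneq rR => ->; rewrite yR.
by move: d; rewrite !dist_universal (negbTE rx) (negbTE ry); do 2!case: ifP.
Qed.

Lemma connected_universal : connected_graph e.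
Proof.
move=> x y; apply: (@connect_trans _ _ z).
  by case: (eqVneq x z) => [->|/z_universal/andP[_ exz]]; rewrite ?connect0 ?connect1.
by case: (eqVneq y z) => [->|/z_universal/andP[ezy _]]; rewrite ?connect0 ?connect1.
Qed.

End UniversalVertex.

Definition graph_compl (T : finType) (h : rel T) : rel T :=
  fun x y => (x != y) && ~~ h x y.

Lemma simple_graph_compl (T : finType) (h : rel T) :
  symmetric h -> simple_graph (graph_compl h).
Proof.
move=> sym; apply/simple_graphP; split=> [x | x y]; first by rewrite /graph_compl eqxx.
by rewrite /graph_compl eq_sym sym.
Qed.

Lemma adj_resolving_compl (T : finType) (h : rel T) (R : {set T}) :
  adj_resolving (graph_compl h) R <-> adj_resolving h R.
Proof.
have E r x : r \in R -> x \notin R -> graph_compl h r x = ~~ h r x.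
  by move=> rR xR; rewrite /graph_compl (contraNneq _ xR) // => <-.
by split=> res x y xy xR yR; have [r rR d] := res x y xy xR yR;
  exists r => //; move: d; rewrite !E // (inj_eq negb_inj).
Qed.

Section Edges.
Variable T : finType.

Lemma set2_eq (x y a b : T) : x != y -> [set x; y] = [set a; b] ->
  (x = a /\ y = b) \/ (x = b /\ y = a).
Proof.
move=> xy E; have : x \in [set a; b] by rewrite -E set21.
have : y \in [set a; b] by rewrite -E set22.
by rewrite !inE => /orP[]/eqP ? /orP[]/eqP ?; subst; rewrite ?eqxx in xy; auto.
Qed.

Lemma mem_edges2 (e : rel T) x y : symmetric e -> x != y ->
  ([set x; y] \in edges e) = e x y.
Proof.
move=> sym xy; apply/imset2P/idP => [[a b _]|exy]; last by exists x y; rewrite ?inE.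
by rewrite inE => eab /(set2_eq xy) [[-> ->] | [-> ->]]; rewrite // sym.
Qed.

Lemma card_edges_compl (h : rel T) : irreflexive h -> symmetric h ->
  #|edges (graph_compl h)| + #|edges h| = 'C(#|T|, 2).
Proof.
move=> irr sym.
have sym_compl : symmetric (graph_compl h) by move=> x y; rewrite /graph_compl eq_sym sym.
have disj : edges (graph_compl h) :&: edges h = set0.
  apply/setP => A; rewrite !inE; apply/negP => /andP[/imset2P[x y _]].
  rewrite inE => /andP[_ /andP[xy nhxy]] ->; by rewrite mem_edges2 // (negbTE nhxy).
have cover : edges (graph_compl h) :|: edges h = [set A : {set T} | #|A| == 2].
  apply/setP => A; rewrite !inE; apply/idP/cards2P.
    case/orP => /imset2P[x y _]; rewrite inE => /andP[_ exy] ->; exists x, y; split=> //.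
      by case/andP: exy.
    by apply: contraTneq exy => ->; rewrite irr.
  by case=> x [y [xy ->]]; rewrite !mem_edges2 // /graph_compl xy; case: (h x y).
by rewrite -card_draws -cover cardsU disj cards0 subn0.
Qed.

End Edges.

(** * Invariance under relabelling of the vertices *)

Section Relabelling.
Variables (T T' : finType) (f : T -> T') (g : T' -> T).
Hypotheses (fK : cancel f g) (gK : cancel g f).
Variable e : rel T'.
Local Notation ef := (relpre f e).

Lemma path_relpre_inv x (p : seq T') : path ef x (map g p) = path e (f x) p.
Proof. by rewrite -path_map (mapK gK). Qed.

Lemma last_relpre_inv x (p : seq T') : f (last x (map g p)) = last (f x) p.
Proof. by rewrite -[in RHS](mapK gK p) last_map. Qed.

Lemma walk_len_relpre x y k : walk_len ef x y k = walk_len e (f x) (f y) k.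
Proof.
apply/existsP/existsP => [[p /andP[pp /eqP <-]] | [p /andP[pp /eqP py]]].
  by exists (map_tuple f p); rewrite /= path_map pp last_map eqxx.
exists (map_tuple g p); rewrite /= path_relpre_inv pp /=.
by rewrite -(can_eq fK) last_relpre_inv py.
Qed.

Lemma connect_relpre x y : connect ef x y = connect e (f x) (f y).
Proof.
apply/connectP/connectP => [[p pp ->] | [p pp py]].
  by exists (map f p); rewrite ?path_map ?last_map.
exists (map g p); first by rewrite path_relpre_inv.
by apply: (can_inj fK); rewrite last_relpre_inv.
Qed.

Lemma dist_relpre x y : dist ef x y = dist e (f x) (f y).
Proof.
rewrite /dist (bij_eq_card (Bijective fK gK)).
by apply: eq_find => k; apply: walk_len_relpre.
Qed.

Lemma imset_relpre_inv (S : {set T'}) : f @: (g @: S) = S.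
Proof. by rewrite -imset_comp (eq_imset _ gK) imset_id. Qed.

Lemma resolving_relpre R : resolving ef R = resolving e (f @: R).
Proof.
apply/resolvingP/resolvingP => [res x y xy | res x y xy].
  have [|r rR] := res (g x) (g y); first by rewrite (can_eq gK).
  by rewrite !dist_relpre !gK => d; exists (f r); rewrite ?imset_f.
have [|_ /imsetP[r rR ->]] := res (f x) (f y); first by rewrite (can_eq fK).
by rewrite -!dist_relpre => d; exists r.
Qed.

Lemma metric_basis_relpre R : metric_basis ef R = metric_basis e (f @: R).
Proof.
rewrite /metric_basis resolving_relpre (card_imset _ (can_inj fK)); congr (_ && _).
apply/forallP/forallP => min S.
  have := min (g @: S).
  by rewrite resolving_relpre imset_relpre_inv (card_imset _ (can_inj gK)).
by have := min (f @: S); rewrite -resolving_relpre (card_imset _ (can_inj fK)).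
Qed.

Lemma basis_forced_relpre v : basis_forced ef v = basis_forced e (f v).
Proof.
apply/forallP/forallP => forced R.
  have := forced (g @: R); rewrite metric_basis_relpre imset_relpre_inv.
  by move=> /implyP Rb; apply/implyP => /Rb /(imset_f f); rewrite imset_relpre_inv.
by have := forced (f @: R); rewrite -metric_basis_relpre (mem_imset _ _ (can_inj fK)).
Qed.

Lemma card_basis_forced_relpre : #|basis_forced_set ef| = #|basis_forced_set e|.
Proof.
rewrite -(card_imset _ (can_inj fK)); apply: eq_card => w; rewrite [in RHS]inE.
apply/imsetP/idP => [[v + ->] | wF]; first by rewrite inE basis_forced_relpre.
by exists (g w); rewrite ?inE ?basis_forced_relpre gK.
Qed.

Lemma card_edges_relpre : #|edges ef| = #|edges e|.
Proof.
rewrite -(card_imset _ (imset_inj (can_inj fK))); apply: eq_card => A.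
apply/imsetP/imset2P => [[_ /imset2P[x y _ exy ->] ->] | [x y _ exy ->]].
  by exists (f x) (f y); rewrite ?imsetU1 ?imset_set1 // !inE in exy *.
exists [set g x; g y]; last by rewrite imsetU1 imset_set1 !gK.
by apply/imset2P; exists (g x) (g y); rewrite // !inE /= !gK in exy *.
Qed.

Lemma simple_graph_relpre : simple_graph e -> simple_graph ef.
Proof.
case/simple_graphP => irr sym; apply/simple_graphP.
by split=> [x | x y]; rewrite /= ?irr // sym.
Qed.

Lemma connected_graph_relpre : connected_graph e -> connected_graph ef.
Proof. by move=> conn x y; rewrite connect_relpre. Qed.

End Relabelling.

Lemma card_option_set (T : finType) (R : {set option T}) :
  #|R| = #|[pred x | Some x \in R]| + (None \in R).
Proof.
rewrite (cardD1 None) addnC; congr (_ + _).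
rewrite -[RHS](card_image (@Some_inj _)); apply: eq_card => -[x|] /=; rewrite !inE /=.
  by rewrite (mem_image (@Some_inj _)) inE.
by case: imageP => // -[].
Qed.

Lemma card_prod_sum (I J : finType) (P : pred (I * J)) :
  #|P| = \sum_i #|[pred j | P (i, j)]|.
Proof.
rewrite -sum1_card (eq_bigr (fun i => \sum_(j | P (i, j)) 1)) => [|i _]; last first.
  by rewrite -sum1_card.
by rewrite pair_big_dep /=; apply: eq_bigl => -[].
Qed.

Lemma sum_nat_ge_tight (I : finType) (s : I -> nat) (n c : nat) :
  (forall i, n <= s i) -> \sum_i s i + c <= #|I| * n ->
  c = 0 /\ forall i, s i = n.
Proof.
move=> s_ge.
have -> : \sum_i s i = \sum_i (s i - n) + #|I| * n.
  rewrite -sum_nat_const -big_split; apply: eq_bigr => i _.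
  by rewrite /= subnK.
rewrite addnAC -[X in _ <= X]add0n leq_add2r leqn0 addn_eq0 sum_nat_eq0.
case/andP => /forall_inP sub0 /eqP c0; split=> // i.
by apply/eqP; rewrite eqn_leq s_ge -subn_eq0 sub0.
Qed.

(** * The complement of m paths on five vertices and an isolated vertex *)

Definition path_adj : rel nat := fun a b => (a.+1 == b) || (b.+1 == a).

Definition p5_separating (s : seq bool) : bool :=
  all (fun p => all (fun q => [|| p == q, nth false s p, nth false s q |
    has (fun c => nth false s c && (path_adj c p != path_adj c q)) (iota 0 5)])
  (iota 0 5)) (iota 0 5).

Definition p5_dominating (s : seq bool) : bool :=
  all (fun p => nth false s p || has (fun c => nth false s c && path_adj c p) (iota 0 5))
  (iota 0 5).

Lemma p5_separating_count s : size s = 5 -> p5_separating s -> 2 <= count id s.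
Proof.
case: s => [|b0 [|b1 [|b2 [|b3 [|b4 []]]]]] // _.
by case: b0; case: b1; case: b2; case: b3; case: b4.
Qed.

Lemma p5_separating_dominating s : size s = 5 -> p5_separating s -> p5_dominating s ->
  count id s <= 2 -> s = [:: false; true; false; true; false].
Proof.
case: s => [|b0 [|b1 [|b2 [|b3 [|b4 []]]]]] // _.
by case: b0; case: b1; case: b2; case: b3; case: b4.
Qed.

Section PathCopies.
Variable m : nat.

Definition p5_vertex := option ('I_m * 'I_5).

(* [Some (i, a)] is vertex [a] of the [i]-th copy of the path 0-1-2-3-4, and [None] is
   an isolated vertex. *)
Definition p5_copies : rel p5_vertex := fun u v =>
  if (u, v) is (Some (i, a), Some (j, b)) then (i == j) && path_adj a b else false.

Definition co_p5_copies : rel p5_vertex := graph_compl p5_copies.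

Definition odd_positions : {set p5_vertex} :=
  [set v : p5_vertex | if v is Some (_, a) then odd a else false].

(* The trace of R on the i-th copy, as a bit list, so that the facts about the path
   proved above by evaluation apply to it. *)
Definition pattern (R : {set p5_vertex}) (i : 'I_m) : seq bool :=
  [seq Some (i, a) \in R | a <- enum 'I_5].

Implicit Types (R : {set p5_vertex}) (i : 'I_m).

Lemma p5_copies_irr : irreflexive p5_copies.
Proof. by case=> [[i a]|] //; rewrite /p5_copies /path_adj /= eqxx orbb; lia. Qed.

Lemma p5_copies_sym : symmetric p5_copies.
Proof. by case=> [[i a]|] [[j b]|] //; rewrite /p5_copies /path_adj /= eq_sym orbC. Qed.

Lemma co_p5_copies_universal v : v != None -> co_p5_copies None v && co_p5_copies v None.
Proof. by case: v => [[i a]|]. Qed.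

Lemma resolving_co_p5_copies R : resolving co_p5_copies R <-> adj_resolving p5_copies R.
Proof.
rewrite -adj_resolving_compl.
exact: iff_sym (rwP (resolving_universalP co_p5_copies_universal R)).
Qed.

Lemma size_pattern R i : size (pattern R i) = 5.
Proof. by rewrite size_map size_enum_ord. Qed.

Lemma nth_pattern R i (a : 'I_5) : nth false (pattern R i) a = (Some (i, a) \in R).
Proof. by rewrite (nth_map ord0) ?size_enum_ord // nth_ord_enum. Qed.

Lemma card_patterns R : #|R| = \sum_(i < m) count id (pattern R i) + (None \in R).
Proof.
rewrite card_option_set card_prod_sum; congr (_ + _); apply: eq_bigr => i _.
by rewrite count_map cardE -size_filter /enum_mem -enumT /= filter_predT.
Qed.

Lemma pattern_separating R i : adj_resolving p5_copies R -> p5_separating (pattern R i).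
Proof.
move=> res; rewrite /p5_separating -val_enum_ord.
apply/allP => _ /mapP[a _ ->]; apply/allP => _ /mapP[b _ ->].
rewrite !nth_pattern; case: (eqVneq (a : nat) b) => [//|ab].
case aR: (Some (i, a) \in R) => //; case bR: (Some (i, b) \in R) => //=.
have [||| [[j c]|] // cR] := res (Some (i, a)) (Some (i, b)); rewrite ?aR ?bR //.
  by apply: contra_neq ab => -[->].
rewrite /p5_copies; case: (eqVneq j i) => [<- /= d|//].
by apply/hasP; exists (c : nat); rewrite ?map_f ?mem_enum ?nth_pattern ?cR.
Qed.

Lemma pattern_dominating R i :
  adj_resolving p5_copies R -> None \notin R -> p5_dominating (pattern R i).
Proof.
move=> res NR; rewrite /p5_dominating -val_enum_ord.
apply/allP => _ /mapP[a _ ->]; rewrite nth_pattern.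
case aR: (Some (i, a) \in R) => //=.
have [||| [[j c]|] // cR] := res (Some (i, a)) None; rewrite ?aR //.
rewrite /p5_copies /= eqbF_neg negbK => /andP[/eqP ji ca]; subst j.
by apply/hasP; exists (c : nat); rewrite ?map_f ?mem_enum ?nth_pattern ?cR.
Qed.

Lemma pattern_separates_vertex R i a y :
  p5_separating (pattern R i) -> p5_dominating (pattern R i) ->
  Some (i, a) \notin R -> y \notin R -> y != Some (i, a) ->
  exists2 r, r \in R & p5_copies r (Some (i, a)) != p5_copies r y.
Proof.
move=> sep /allP/(_ a) dom aR yR ya.
move: dom; rewrite -val_enum_ord map_f ?mem_enum // nth_pattern (negbTE aR) has_map /=.
case/(_ isT)/hasP => c _ /=; rewrite nth_pattern => /andP[cR ca].
case: (boolP (p5_copies (Some (i, c)) y)) => [cy | ncy]; last first.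
  by exists (Some (i, c)); rewrite // (negbTE ncy) /p5_copies /= eqxx ca.
case: y cy yR ya => [[j b]|] //; rewrite /p5_copies /= => /andP[/eqP <- _] bR ba.
have ab : (a : nat) != b by apply: contra_neq ba => /val_inj ->.
move/allP/(_ a): sep; rewrite mem_iota ltn_ord => /(_ isT) /allP /(_ b).
rewrite mem_iota ltn_ord !nth_pattern (negbTE aR) (negbTE bR) (negbTE ab).
rewrite -val_enum_ord has_map => /(_ isT) /hasP[d _] /=.
rewrite nth_pattern => /andP[dR dab].
by exists (Some (i, d)); rewrite // /p5_copies /= eqxx.
Qed.

Lemma adj_resolving_of_patterns R :
  (forall i, p5_separating (pattern R i)) -> (forall i, p5_dominating (pattern R i)) ->
  adj_resolving p5_copies R.
Proof.
move=> sep dom [[i a]|] y xy xR yR.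
  by apply: pattern_separates_vertex; rewrite // eq_sym.
case: y xy yR => [[i b]|] // _ yR.
have [r rR d] := pattern_separates_vertex (sep i) (dom i) yR xR isT.
by exists r; rewrite // eq_sym.
Qed.

Lemma odd_positions_pattern i :
  pattern odd_positions i = [:: false; true; false; true; false].
Proof.
rewrite /pattern (eq_map (_ : _ =1 odd \o val)) => [|a]; last by rewrite inE.
by rewrite map_comp val_enum_ord.
Qed.

Lemma card_odd_positions : #|odd_positions| = 2 * m.
Proof.
rewrite card_patterns inE addn0 (eq_bigr (fun _ => 2)) => [|i _].
  by rewrite sum_nat_const card_ord mulnC.
by rewrite odd_positions_pattern.
Qed.

Lemma odd_positions_resolving : resolving co_p5_copies odd_positions.
Proof.
by apply/resolving_co_p5_copies/adj_resolving_of_patterns => i;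
  rewrite odd_positions_pattern.
Qed.

Lemma metric_basis_co_p5_copies R : metric_basis co_p5_copies R = (R == odd_positions).
Proof.
apply/idP/eqP => [/andP[/resolving_co_p5_copies res /forallP min] | ->]; last first.
  rewrite /metric_basis odd_positions_resolving; apply/forallP => S.
  apply/implyP => /resolving_co_p5_copies res; rewrite card_odd_positions card_patterns.
  have -> : 2 * m = \sum_(i < m) 2 by rewrite sum_nat_const card_ord mulnC.
  apply: leq_trans (leq_addr _ _); apply: leq_sum => i _.
  exact: p5_separating_count (size_pattern _ _) (pattern_separating _ res).
have sep i := pattern_separating i res.
have le_card : \sum_(i < m) count id (pattern R i) + (None \in R) <= #|'I_m| * 2.
  rewrite card_ord mulnC -card_odd_positions -card_patterns.
  exact: implyP (min _) odd_positions_resolving.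
have count_ge2 i := p5_separating_count (size_pattern R i) (sep i).
have [NR0 count2] := sum_nat_ge_tight count_ge2 le_card.
have NR : None \notin R by move: NR0; case: (None \in R).
apply/setP => -[[i a]|]; last by rewrite inE (negbTE NR).
rewrite -nth_pattern -[in RHS]nth_pattern odd_positions_pattern.
have dom := pattern_dominating i res NR.
by rewrite (p5_separating_dominating (size_pattern R i) (sep i) dom) ?count2.
Qed.

Lemma basis_forced_set_co_p5_copies : basis_forced_set co_p5_copies = odd_positions.
Proof.
apply/setP => v; rewrite inE; apply/forallP/idP => [forced | vB R].
  by have := forced odd_positions; rewrite metric_basis_co_p5_copies eqxx.
by rewrite metric_basis_co_p5_copies; apply/implyP => /eqP ->.
Qed.

Definition p5_edge (it : 'I_m * 'I_4) : {set p5_vertex} :=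
  [set Some (it.1, widen_ord (leqnSn 4) it.2); Some (it.1, lift ord0 it.2)].

Lemma p5_edge_inj : injective p5_edge.
Proof.
move=> [i t] [j u] E; have [] := set2_eq _ E.
- by apply/eqP => -[]; rewrite /bump leq0n /= => /eqP; rewrite add1n eqn_leq ltnn andbF.
- by case=> -[-> /val_inj ->].
- by case=> -[_ tu] -[_]; move: tu; rewrite /bump !leq0n /=; lia.
Qed.

Lemma edges_p5_copies : edges p5_copies = [set p5_edge it | it : 'I_m * 'I_4].
Proof.
apply/setP => A; apply/imset2P/imsetP => [[x y _] | [[i t] _ ->]]; last first.
  exists (Some (i, widen_ord (leqnSn 4) t)) (Some (i, lift ord0 t)) => //.
  by rewrite inE /p5_copies /= eqxx /path_adj /= eqxx.
rewrite inE; case: x y => [[i a]|] [[j b]|] //=.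
rewrite /p5_copies /path_adj /= => /andP[/eqP <-] /orP[] /eqP ab ->.
  have a_lt : a < 4 by have := ltn_ord b; lia.
  exists (i, Ordinal a_lt); rewrite // /p5_edge.
  by congr [set Some (_, _); Some (_, _)]; apply: val_inj.
have b_lt : b < 4 by have := ltn_ord a; lia.
exists (i, Ordinal b_lt); rewrite // /p5_edge setUC.
by congr [set Some (_, _); Some (_, _)]; apply: val_inj.
Qed.

Lemma card_edges_p5_copies : #|edges p5_copies| = 4 * m.
Proof.
by rewrite edges_p5_copies (card_imset _ p5_edge_inj) card_prod !card_ord mulnC.
Qed.

End PathCopies.

Theorem corollary3 (k : nat) :
  0 < k -> ~~ odd k ->
  exists (n : nat) (e : rel 'I_n),
    [/\ simple_graph e, connected_graph e,
        #|basis_forced_set e| = k &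
        #|edges e| + 2 * k = (n * (n - 1)) %/ 2].
Proof.
(* The construction also works for k = 0 (a single vertex), so positivity is unused. *)
move=> _ k_even; have [m ->] : exists m, k = 2 * m.
  by exists k./2; rewrite mul2n -[in LHS](odd_double_half k) (negbTE k_even).
have fK := @enum_valK (p5_vertex m); have gK := @enum_rankK (p5_vertex m).
exists #|{: p5_vertex m}|, (relpre enum_val (@co_p5_copies m)); split.
- exact/simple_graph_relpre/simple_graph_compl/p5_copies_sym.
- exact: connected_graph_relpre fK gK _ (connected_universal (@co_p5_copies_universal m)).
- rewrite (card_basis_forced_relpre fK gK) basis_forced_set_co_p5_copies.
  exact: card_odd_positions.
rewrite (card_edges_relpre fK gK) mulnA -card_edges_p5_copies card_edges_compl.
- by rewrite bin2 divn2 subn1.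
- exact: p5_copies_irr.
- exact: p5_copies_sym.
Qed.
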